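(* Let $G$ be a bounded metric operator in $\mathcal H$ and $S$ a closed densely defined operator in $\mathcal H$. Define $K$ on $D(K)=G^{1/2}D(S)$ by $K\xi=G^{1/2}SG^{-1/2}\xi$. Then $K$ is densely defined and $K^*=G^{-1/2}S^*G^{1/2}$, the latter operator being defined on its natural domain $\{\eta\in\mathcal H: G^{1/2}\eta\in D(S^* ),\ S^*G^{1/2}\eta\in D(G^{-1/2})\}$.
   Context: A metric operator in $\mathcal H$ is a self-adjoint operator $G$ with $\langle G\xi,\xi\rangle>0$ for all nonzero $\xi\in D(G)$; it is injective, and $G^{-1/2}$ denotes the (possibly unbounded) inverse of $G^{1/2}$. *)

From Stdlib Require Import Reals.
Open Scope R_scope.

Record C := mkC { re : R ; im : R }.
Definition C0 : C := mkC 0 0.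
Definition C1 : C := mkC 1 0.
Definition Cadd (a b : C) : C := mkC (re a + re b) (im a + im b).
Definition Cmul (a b : C) : C :=
  mkC (re a * re b - im a * im b) (re a * im b + im a * re b).
Definition Cconj (a : C) : C := mkC (re a) (- im a).

(** A complex Hilbert space structure on a type H
    (inner product linear in the first, conjugate-linear in the second argument). *)
Class HilbertSpace (H : Type) := {
  vzero : H ;
  vadd : H -> H -> H ;
  vopp : H -> H ;
  vscal : C -> H -> H ;
  inner : H -> H -> C ;
  vadd_assoc : forall x y z, vadd x (vadd y z) = vadd (vadd x y) z ;
  vadd_comm : forall x y, vadd x y = vadd y x ;
  vadd_0 : forall x, vadd x vzero = x ;
  vadd_opp : forall x, vadd x (vopp x) = vzero ;
  vscal_1 : forall x, vscal C1 x = x ;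
  vscal_mul : forall a b x, vscal a (vscal b x) = vscal (Cmul a b) x ;
  vscal_addv : forall a x y, vscal a (vadd x y) = vadd (vscal a x) (vscal a y) ;
  vscal_adds : forall a b x, vscal (Cadd a b) x = vadd (vscal a x) (vscal b x) ;
  inner_addl : forall x y z, inner (vadd x y) z = Cadd (inner x z) (inner y z) ;
  inner_scall : forall a x y, inner (vscal a x) y = Cmul a (inner x y) ;
  inner_conj : forall x y, inner y x = Cconj (inner x y) ;
  inner_pos : forall x, 0 <= re (inner x x) ;
  inner_def : forall x, inner x x = C0 -> x = vzero ;
  complete : forall u : nat -> H,
    (forall eps, eps > 0 -> exists N, forall n m, (n >= N)%nat -> (m >= N)%nat ->
        sqrt (re (inner (vadd (u n) (vopp (u m))) (vadd (u n) (vopp (u m))))) < eps) ->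
    exists l, Un_cv (fun n => sqrt (re (inner (vadd (u n) (vopp l)) (vadd (u n) (vopp l))))) 0
}.

Section Ops.
Context {H : Type} {HS : HilbertSpace H}.

Definition norm (x : H) : R := sqrt (re (inner x x)).
Definition vsub (x y : H) : H := vadd x (vopp y).

Definition converges (u : nat -> H) (l : H) : Prop :=
  Un_cv (fun n => norm (vsub (u n) l)) 0.

Definition dense (P : H -> Prop) : Prop :=
  forall x eps, eps > 0 -> exists y, P y /\ norm (vsub x y) < eps.

(** A (possibly unbounded) operator: a domain and an action
    (the action outside the domain is irrelevant). *)
Record Op := mkOp { dom : H -> Prop ; app : H -> H }.

Definition linear_op (T : Op) : Prop :=
  dom T vzero /\
  (forall x y, dom T x -> dom T y -> dom T (vadd x y)) /\
  (forall a x, dom T x -> dom T (vscal a x)) /\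
  (forall x y, dom T x -> dom T y -> app T (vadd x y) = vadd (app T x) (app T y)) /\
  (forall a x, dom T x -> app T (vscal a x) = vscal a (app T x)).

Definition densely_defined (T : Op) : Prop := dense (dom T).

Definition closed_op (T : Op) : Prop :=
  forall (u : nat -> H) x y, (forall n, dom T (u n)) ->
    converges u x -> converges (fun n => app T (u n)) y ->
    dom T x /\ app T x = y.

Definition is_adjoint (T Ts : Op) : Prop :=
  (forall eta, dom Ts eta <->
     exists zeta, forall xi, dom T xi -> inner (app T xi) eta = inner xi zeta) /\
  (forall eta xi, dom Ts eta -> dom T xi ->
     inner (app T xi) eta = inner xi (app Ts eta)).

Definition bounded_op (A : H -> H) : Prop :=
  (forall x y, A (vadd x y) = vadd (A x) (A y)) /\
  (forall a x, A (vscal a x) = vscal a (A x)) /\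
  (exists M, forall x, norm (A x) <= M * norm x).

Definition bounded_selfadjoint (A : H -> H) : Prop :=
  bounded_op A /\ forall x y, inner (A x) y = inner x (A y).

Definition bounded_metric_operator (G : H -> H) : Prop :=
  bounded_selfadjoint G /\
  forall x, x <> vzero -> im (inner (G x) x) = 0 /\ re (inner (G x) x) > 0.

(** R is the positive square root G^{1/2} of the bounded positive operator G
    (characterized by: bounded, self-adjoint, positive, R R = G; it is unique). *)
Definition positive_sqrt (R0 G : H -> H) : Prop :=
  bounded_selfadjoint R0 /\
  (forall x, im (inner (R0 x) x) = 0 /\ 0 <= re (inner (R0 x) x)) /\
  (forall x, R0 (R0 x) = G x).

End Ops.
Arguments Op H : clear implicits.

(** The heart of the matter is that the injective self-adjoint operator
    [G^{1/2}] has dense range.  To avoid the projection theorem we run the Landweber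
    iteration [z_{k+1} = z_k - c G z_k] with [c ||G^{1/2}||^2 <= 1]: every
    iterate differs from the starting point by an element of the range, the
    squared norms [b_k = ||z_k||^2] decrease, and by self-adjointness
    [||z_{2n} - z_{2m}||^2 = b_{2n} + b_{2m} - 2 b_{n+m}], so [z_{2n}] is Cauchy;
    its limit is killed by [G^{1/2}], hence is [0].  Density of
    [D(K) = G^{1/2} D(S)] follows by continuity of [G^{1/2}], and the adjoint
    is identified by moving [G^{1/2}] across inner products, using density of
    [D(S)] for the inclusion [D(K^* ) ⊆ D(G^{-1/2} S^* G^{1/2})]. *)

From Stdlib Require Import Reals Lra Lia Classical.
Open Scope R_scope.

Definition rc (a : R) : C := mkC a 0.

Section InnerProductSpace.
Context {H : Type} {HS : HilbertSpace H}.

Lemma vadd_0l x : vadd vzero x = x.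
Proof. rewrite vadd_comm; apply vadd_0. Qed.

Lemma vadd_oppl x : vadd (vopp x) x = vzero.
Proof. rewrite vadd_comm; apply vadd_opp. Qed.

Lemma vadd_cancel x y z : vadd x y = vadd x z -> y = z.
Proof.
  intro E.
  rewrite <- (vadd_0l y), <- (vadd_0l z), <- (vadd_oppl x), <- !vadd_assoc, E.
  reflexivity.
Qed.

Lemma vscal_0 x : vscal C0 x = vzero.
Proof.
  apply (vadd_cancel (vscal C0 x)).
  rewrite vadd_0, <- vscal_adds; f_equal.
  unfold Cadd, C0; simpl; f_equal; ring.
Qed.

Lemma vopp_scal x : vopp x = vscal (rc (-1)) x.
Proof.
  apply (vadd_cancel x).
  rewrite vadd_opp, <- (vscal_1 x) at 1.
  rewrite <- vscal_adds, <- (vscal_0 x); f_equal.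
  unfold Cadd, C1, C0, rc; simpl; f_equal; ring.
Qed.

Lemma vopp_vadd x y : vopp (vadd x y) = vadd (vopp x) (vopp y).
Proof. rewrite !vopp_scal, vscal_addv; reflexivity. Qed.

Lemma vsub_0 x : vsub x vzero = x.
Proof.
  unfold vsub; rewrite <- (vadd_0l (vopp vzero)), vadd_opp; apply vadd_0.
Qed.

Lemma vsub_eq0 x y : vsub x y = vzero -> x = y.
Proof.
  intro E; apply (vadd_cancel (vopp y)).
  rewrite vadd_oppl, vadd_comm; exact E.
Qed.

Lemma vsub_split x y z : vsub x z = vadd (vsub x y) (vsub y z).
Proof.
  unfold vsub.
  rewrite <- vadd_assoc, (vadd_assoc (vopp y)), vadd_oppl, vadd_0l; reflexivity.
Qed.

Lemma vsub_vsub x y z : vsub (vsub x y) z = vsub x (vadd y z).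
Proof. unfold vsub; rewrite vopp_vadd, vadd_assoc; reflexivity. Qed.

Lemma vsub_swap x y : vsub x y = vscal (rc (-1)) (vsub y x).
Proof.
  unfold vsub; rewrite <- vopp_scal, vopp_vadd, vadd_comm.
  rewrite (vopp_scal (vopp x)), <- vopp_scal.
  f_equal; apply (vadd_cancel (vopp x)); rewrite vadd_opp, vadd_oppl; reflexivity.
Qed.

Lemma inner_addr x y z : inner x (vadd y z) = Cadd (inner x y) (inner x z).
Proof.
  rewrite inner_conj, inner_addl, (inner_conj y x), (inner_conj z x).
  unfold Cconj, Cadd; simpl; f_equal; ring.
Qed.

Lemma inner_scalr a x y : inner x (vscal a y) = Cmul (Cconj a) (inner x y).
Proof.
  rewrite inner_conj, inner_scall, (inner_conj y x).
  unfold Cconj, Cmul; simpl; f_equal; ring.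
Qed.

Lemma inner_0l y : inner vzero y = C0.
Proof.
  rewrite <- (vscal_0 vzero), inner_scall.
  unfold Cmul, C0; simpl; f_equal; ring.
Qed.

Lemma inner_0r y : inner y vzero = C0.
Proof. rewrite inner_conj, inner_0l; unfold Cconj, C0; simpl; f_equal; ring. Qed.

Lemma inner_subr x y z :
  inner x (vsub y z) = Cadd (inner x y) (Cmul (rc (-1)) (inner x z)).
Proof.
  unfold vsub; rewrite inner_addr, vopp_scal, inner_scalr.
  replace (Cconj (rc (-1))) with (rc (-1)) by (unfold Cconj, rc; simpl; f_equal; ring).
  reflexivity.
Qed.

Lemma re_inner_addl x y z : re (inner (vadd x y) z) = re (inner x z) + re (inner y z).
Proof. rewrite inner_addl; reflexivity. Qed.

Lemma re_inner_scall a x y : re (inner (vscal (rc a) x) y) = a * re (inner x y).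
Proof. rewrite inner_scall; unfold Cmul, rc; simpl; ring. Qed.

Lemma re_inner_scalr a x y : re (inner x (vscal (rc a) y)) = a * re (inner x y).
Proof. rewrite inner_scalr; unfold Cmul, Cconj, rc; simpl; ring. Qed.

Lemma re_inner_subl x y z : re (inner (vsub x y) z) = re (inner x z) - re (inner y z).
Proof. unfold vsub; rewrite re_inner_addl, vopp_scal, re_inner_scall; ring. Qed.

Lemma re_inner_subr x y z : re (inner x (vsub y z)) = re (inner x y) - re (inner x z).
Proof. rewrite inner_subr; unfold Cadd, Cmul, rc; simpl; ring. Qed.

Lemma re_inner_sym x y : re (inner y x) = re (inner x y).
Proof. rewrite inner_conj; reflexivity. Qed.

Definition sqnorm (x : H) : R := re (inner x x).

Lemma sqnorm_ge0 x : 0 <= sqnorm x.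
Proof. apply inner_pos. Qed.

Lemma sqnorm_eq0 x : sqnorm x = 0 -> x = vzero.
Proof.
  intro E; apply inner_def.
  pose proof (f_equal im (inner_conj x x)) as I; unfold sqnorm in E.
  destruct (inner x x) as [r i]; unfold C0; simpl in *; f_equal; lra.
Qed.

Lemma sqnorm_sub x y :
  sqnorm (vsub x y) = sqnorm x + sqnorm y - 2 * re (inner x y).
Proof.
  unfold sqnorm; rewrite re_inner_subl, !re_inner_subr, (re_inner_sym y x); ring.
Qed.

Lemma sqnorm_scal a x : sqnorm (vscal (rc a) x) = a * a * sqnorm x.
Proof. unfold sqnorm; rewrite re_inner_scall, re_inner_scalr; ring. Qed.

Lemma norm_ge0 x : 0 <= norm x.
Proof. apply sqrt_pos. Qed.

Lemma norm_sqr x : norm x * norm x = sqnorm x.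
Proof. apply sqrt_sqrt, sqnorm_ge0. Qed.

Lemma norm_lt_sqnorm x e : 0 < e -> sqnorm x < e * e -> norm x < e.
Proof.
  intros He Hx; pose proof (norm_sqr x); pose proof (norm_ge0 x); nra.
Qed.

Lemma norm_scal a x : norm (vscal (rc a) x) = Rabs a * norm x.
Proof.
  unfold norm; fold (sqnorm (vscal (rc a) x)); rewrite sqnorm_scal.
  rewrite sqrt_mult_alt by nra.
  f_equal; apply sqrt_Rsqr_abs.
Qed.

Lemma norm_eq0 x : norm x = 0 -> x = vzero.
Proof. intro E; apply sqnorm_eq0; rewrite <- norm_sqr, E; ring. Qed.

Lemma re_inner_le_norm x y : re (inner x y) <= norm x * norm y.
Proof.
  set (r := re (inner x y)).
  assert (CS : r * r <= sqnorm x * sqnorm y).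
  { destruct (Req_dec (sqnorm y) 0) as [Ey | Ey].
    - unfold r; rewrite Ey, (sqnorm_eq0 y Ey), inner_0r; simpl; lra.
    - (* expand [0 <= ||x - (r/||y||^2) y||^2] *)
      pose proof (sqnorm_ge0 (vsub x (vscal (rc (r / sqnorm y)) y))) as P.
      rewrite sqnorm_sub, sqnorm_scal, re_inner_scalr in P; fold r in P.
      pose proof (sqnorm_ge0 y) as Py.
      assert (0 < sqnorm y) by lra.
      replace (sqnorm x + r / sqnorm y * (r / sqnorm y) * sqnorm y
               - 2 * (r / sqnorm y * r))
        with (sqnorm x - r * r / sqnorm y) in P by (field; lra).
      apply Rmult_le_reg_r with (/ sqnorm y); [apply Rinv_0_lt_compat; lra |].
      replace (sqnorm x * sqnorm y * / sqnorm y) with (sqnorm x) by (field; lra).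
      unfold Rdiv in P; lra. }
  rewrite <- !norm_sqr in CS.
  assert (0 <= norm x * norm y) by (apply Rmult_le_pos; apply norm_ge0).
  destruct (Rle_lt_dec r (norm x * norm y)) as [Le | Lt]; [exact Le | nra].
Qed.

Lemma norm_triangle x y : norm (vadd x y) <= norm x + norm y.
Proof.
  assert (E : sqnorm (vadd x y) = sqnorm x + sqnorm y + 2 * re (inner x y)).
  { unfold sqnorm; rewrite !re_inner_addl, !inner_addr; simpl.
    rewrite (re_inner_sym y x); ring. }
  rewrite <- !norm_sqr in E.
  pose proof (re_inner_le_norm x y); pose proof (norm_ge0 x); pose proof (norm_ge0 y);
    pose proof (norm_ge0 (vadd x y)); nra.
Qed.

Lemma norm_sub_triangle x y z : norm (vsub x z) <= norm (vsub x y) + norm (vsub y z).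
Proof. rewrite (vsub_split x y z); apply norm_triangle. Qed.

Lemma norm_sub_sym x y : norm (vsub x y) = norm (vsub y x).
Proof. rewrite vsub_swap, norm_scal, Rabs_left by lra; ring. Qed.

Lemma norm_lt_all_eq0 x : (forall e, 0 < e -> norm x < e) -> x = vzero.
Proof.
  intro Hx; apply norm_eq0.
  destruct (Rle_lt_or_eq_dec 0 (norm x) (norm_ge0 x)) as [Pos | Z]; [| auto].
  specialize (Hx _ Pos); lra.
Qed.

Lemma orthogonal_dense_eq0 (P : H -> Prop) w :
  dense P -> (forall x, P x -> inner x w = C0) -> w = vzero.
Proof.
  intros HP Orth; apply norm_eq0.
  destruct (Rle_lt_or_eq_dec 0 (norm w) (norm_ge0 w)) as [Pos | Z]; [| auto].
  destruct (HP w (norm w / 2)) as [y [Py Hy]]; [lra |].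
  (* [||w||^2 = re <w - y, w> <= ||w - y|| ||w||] *)
  pose proof (re_inner_le_norm (vsub w y) w) as CS.
  rewrite re_inner_subl, (Orth y Py) in CS; simpl in CS.
  fold (sqnorm w) in CS; rewrite <- norm_sqr in CS.
  pose proof (norm_ge0 (vsub w y)); nra.
Qed.

Lemma converges_intro (u : nat -> H) l :
  (forall e, 0 < e -> exists N, forall n, (n >= N)%nat -> norm (vsub (u n) l) < e) ->
  converges u l.
Proof.
  intros Hu e He; destruct (Hu e He) as [N HN]; exists N; intros n Hn.
  unfold Rdist; rewrite Rminus_0_r, Rabs_right by (apply Rle_ge, norm_ge0).
  auto.
Qed.

Lemma converges_lt (u : nat -> H) l e :
  converges u l -> 0 < e -> exists N, forall n, (n >= N)%nat -> norm (vsub (u n) l) < e.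
Proof.
  intros Hu He; destruct (Hu e He) as [N HN]; exists N; intros n Hn.
  specialize (HN n Hn); unfold Rdist in HN.
  rewrite Rminus_0_r, Rabs_right in HN by (apply Rle_ge, norm_ge0); exact HN.
Qed.

Lemma converges_unique (u : nat -> H) l1 l2 :
  converges u l1 -> converges u l2 -> l1 = l2.
Proof.
  intros H1 H2; apply vsub_eq0, norm_lt_all_eq0; intros e He.
  destruct (converges_lt u l1 (e / 2) H1) as [N1 HN1]; [lra |].
  destruct (converges_lt u l2 (e / 2) H2) as [N2 HN2]; [lra |].
  specialize (HN1 (Nat.max N1 N2) (Nat.le_max_l _ _)).
  specialize (HN2 (Nat.max N1 N2) (Nat.le_max_r _ _)).
  pose proof (norm_sub_triangle l1 (u (Nat.max N1 N2)) l2).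
  rewrite norm_sub_sym in HN1; lra.
Qed.

End InnerProductSpace.

Section BoundedLinearMap.
Context {H : Type} {HS : HilbertSpace H}.
Variable A : H -> H.
Hypothesis A_add : forall x y, A (vadd x y) = vadd (A x) (A y).
Hypothesis A_scal : forall a x, A (vscal a x) = vscal a (A x).

Lemma linear_vzero : A vzero = vzero.
Proof. rewrite <- (vscal_0 vzero), A_scal, !vscal_0; reflexivity. Qed.

Lemma linear_vsub x y : A (vsub x y) = vsub (A x) (A y).
Proof. unfold vsub; rewrite A_add, !vopp_scal, A_scal; reflexivity. Qed.

Variable M : R.
Hypothesis M_pos : 0 < M.
Hypothesis A_bound : forall x, norm (A x) <= M * norm x.

Lemma norm_linear_sub_lt x y e : norm (vsub x y) < e / M -> norm (vsub (A x) (A y)) < e.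
Proof.
  intro Hxy; rewrite <- linear_vsub.
  eapply Rle_lt_trans; [apply A_bound |].
  apply Rmult_lt_reg_l with (/ M); [apply Rinv_0_lt_compat; lra |].
  replace (/ M * (M * norm (vsub x y))) with (norm (vsub x y)) by (field; lra).
  unfold Rdiv in Hxy; lra.
Qed.

Lemma converges_linear (u : nat -> H) l :
  converges u l -> converges (fun n => A (u n)) (A l).
Proof.
  intro Hu; apply converges_intro; intros e He.
  destruct (converges_lt u l (e / M) Hu) as [N HN]; [apply Rdiv_lt_0_compat; lra |].
  exists N; intros n Hn; apply norm_linear_sub_lt, HN, Hn.
Qed.

Lemma dense_linear_image (P : H -> Prop) :
  dense (fun z => exists y, z = A y) -> dense P ->
  dense (fun z => exists x, P x /\ z = A x).
Proof.
  intros Hrange HP x e He.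
  destruct (Hrange x (e / 2)) as [z [[y ->] Hy]]; [lra |].
  destruct (HP y (e / 2 / M)) as [s [Ps Hs]].
  { apply Rdiv_lt_0_compat; lra. }
  exists (A s); split; [exists s; auto |].
  pose proof (norm_sub_triangle x (A y) (A s)).
  pose proof (norm_linear_sub_lt y s (e / 2) Hs); lra.
Qed.

End BoundedLinearMap.

Lemma decreasing_lb_tail (b : nat -> R) :
  Un_decreasing b -> (forall n, 0 <= b n) ->
  exists l, (forall n, l <= b n) /\
            forall e, 0 < e -> exists N, forall n, (n >= N)%nat -> b n < l + e.
Proof.
  intros Hdec Hpos.
  assert (Hlb : has_lb b).
  { exists 0; intros y [n ->]; unfold opp_seq; specialize (Hpos n); lra. }
  destruct (decreasing_cv b Hdec Hlb) as [l Hl].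
  exists l; split; [apply decreasing_ineq; auto |].
  intros e He; destruct (Hl e He) as [N HN]; exists N; intros n Hn.
  specialize (HN n Hn); unfold Rdist in HN.
  pose proof (Rle_abs (b n - l)); lra.
Qed.

Section Landweber.
Context {H : Type} {HS : HilbertSpace H}.
Variable A : H -> H.
Hypothesis A_add : forall x y, A (vadd x y) = vadd (A x) (A y).
Hypothesis A_scal : forall a x, A (vscal a x) = vscal a (A x).
Hypothesis A_sym : forall x y, inner (A x) y = inner x (A y).
Variable M : R.
Hypothesis M_pos : 0 < M.
Hypothesis A_bound : forall x, norm (A x) <= M * norm x.

Let c := / (M * M).

Lemma landweber_gain_pos : 0 < c.
Proof. apply Rinv_0_lt_compat; nra. Qed.

Definition landweber_step (z : H) : H := vsub z (vscal (rc c) (A (A z))).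

Local Notation landweber k := (Nat.iter k landweber_step).

Lemma re_inner_landweber_step u v :
  re (inner (landweber_step u) v) = re (inner u (landweber_step v)).
Proof.
  unfold landweber_step.
  rewrite re_inner_subl, re_inner_subr, re_inner_scall, re_inner_scalr, !A_sym.
  reflexivity.
Qed.

Lemma re_inner_landweber_sym k u v :
  re (inner (landweber k u) v) = re (inner u (landweber k v)).
Proof.
  revert v; induction k as [| k IH]; intro v; [reflexivity |].
  rewrite Nat.iter_succ, re_inner_landweber_step, IH, Nat.iter_succ_r; reflexivity.
Qed.

Lemma re_inner_landweber i j x :
  re (inner (landweber i x) (landweber j x)) = re (inner x (landweber (i + j) x)).
Proof. rewrite re_inner_landweber_sym, Nat.iter_add; reflexivity. Qed.

Lemma sqnorm_landweber_step z :
  sqnorm (landweber_step z) + c * sqnorm (A z) <= sqnorm z.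
Proof.
  unfold landweber_step; rewrite sqnorm_sub, sqnorm_scal, re_inner_scalr.
  rewrite <- A_sym; fold (sqnorm (A z)).
  assert (Hbound : sqnorm (A (A z)) <= M * M * sqnorm (A z)).
  { rewrite <- !norm_sqr.
    pose proof (A_bound (A z)); pose proof (norm_ge0 (A (A z))); nra. }
  assert (Hc : c * (M * M) = 1) by (unfold c; field; lra).
  pose proof landweber_gain_pos; pose proof (sqnorm_ge0 (A z)).
  assert (c * c * sqnorm (A (A z)) <= c * sqnorm (A z)).
  { apply Rle_trans with (c * (c * (M * M)) * sqnorm (A z)); [| rewrite Hc; lra].
    replace (c * (c * (M * M)) * sqnorm (A z)) with (c * c * (M * M * sqnorm (A z)))
      by ring.
    apply Rmult_le_compat_l; nra. }
  lra.
Qed.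

Lemma landweber_sub_range k x : exists y, landweber k x = vsub x (A y).
Proof.
  induction k as [| k [y Hy]].
  - exists vzero; rewrite (linear_vzero A A_scal), vsub_0; reflexivity.
  - exists (vadd y (vscal (rc c) (A (landweber k x)))).
    rewrite Nat.iter_succ, A_add, A_scal, <- vsub_vsub, <- Hy; reflexivity.
Qed.

Section Orbit.
Variable x : H.

Let b k := sqnorm (landweber k x).

Lemma landweber_sqnorm_decreasing : Un_decreasing b.
Proof.
  intro n; unfold b; rewrite Nat.iter_succ.
  pose proof (sqnorm_landweber_step (landweber n x)).
  pose proof (sqnorm_ge0 (A (landweber n x))); pose proof landweber_gain_pos; nra.
Qed.

Lemma sqnorm_landweber_sub n m :
  sqnorm (vsub (landweber (2 * n) x) (landweber (2 * m) x))
  = b (2 * n)%nat + b (2 * m)%nat - 2 * b (n + m)%nat.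
Proof.
  unfold b, sqnorm; fold (sqnorm (vsub (landweber (2 * n) x) (landweber (2 * m) x))).
  rewrite sqnorm_sub; unfold sqnorm; rewrite !re_inner_landweber.
  replace (n + m + (n + m))%nat with (2 * n + 2 * m)%nat by lia; ring.
Qed.

Section Limit.
Variable l : R.
Hypothesis b_ge : forall n, l <= b n.
Hypothesis b_tail : forall e, 0 < e -> exists N, forall n, (n >= N)%nat -> b n < l + e.

Lemma landweber_cauchy e : e > 0 -> exists N, forall n m, (n >= N)%nat -> (m >= N)%nat ->
  norm (vsub (landweber (2 * n) x) (landweber (2 * m) x)) < e.
Proof.
  intro He; destruct (b_tail (e * e / 2)) as [N HN]; [nra |].
  exists N; intros n m Hn Hm; apply norm_lt_sqnorm; [lra |].
  rewrite sqnorm_landweber_sub.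
  pose proof (HN (2 * n)%nat ltac:(lia)); pose proof (HN (2 * m)%nat ltac:(lia)).
  pose proof (b_ge (n + m)); lra.
Qed.

Lemma A_landweber_converges_0 :
  converges (fun n => A (landweber (2 * n) x)) vzero.
Proof.
  pose proof landweber_gain_pos.
  apply converges_intro; intros e He.
  destruct (b_tail (c * (e * e))) as [N HN]; [apply Rmult_lt_0_compat; nra |].
  exists N; intros n Hn; rewrite vsub_0; apply norm_lt_sqnorm; [lra |].
  (* [c ||A z_{2n}||^2 <= b_{2n} - b_{2n+1} <= b_{2n} - l] *)
  pose proof (sqnorm_landweber_step (landweber (2 * n) x)).
  pose proof (b_ge (S (2 * n))); pose proof (HN (2 * n)%nat ltac:(lia)).
  unfold b in *; rewrite Nat.iter_succ in *.
  apply Rmult_lt_reg_l with c; lra.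
Qed.

End Limit.

Hypothesis A_inj : forall z, A z = vzero -> z = vzero.

Lemma landweber_converges_0 : converges (fun n => landweber (2 * n) x) vzero.
Proof.
  destruct (decreasing_lb_tail b landweber_sqnorm_decreasing (fun n => sqnorm_ge0 _))
    as [l [b_ge b_tail]].
  destruct (complete _ (landweber_cauchy l b_ge b_tail)) as [L HL].
  change (converges (fun n => landweber (2 * n) x) L) in HL.
  assert (AL : A L = vzero).
  { apply (converges_unique (fun n => A (landweber (2 * n) x)));
      [ apply (converges_linear A A_add A_scal M M_pos A_bound); exact HL
      | exact (A_landweber_converges_0 l b_ge b_tail) ]. }
  rewrite <- (A_inj L AL); exact HL.
Qed.

End Orbit.

Lemma selfadjoint_injective_dense_range :
  (forall z, A z = vzero -> z = vzero) -> dense (fun z => exists y, z = A y).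
Proof.
  intros A_inj x e He.
  destruct (converges_lt _ _ e (landweber_converges_0 x A_inj) He) as [N HN].
  destruct (landweber_sub_range (2 * N) x) as [y Hy].
  exists (A y); split; [exists y; reflexivity |].
  specialize (HN N (le_n N)); rewrite vsub_0, Hy in HN; exact HN.
Qed.

End Landweber.

Section ConjugatedAdjoint.
Context {H : Type} {HS : HilbertSpace H}.
Variable A : H -> H.
Hypothesis A_sym : forall x y, inner (A x) y = inner x (A y).
Variables S Sstar K : Op H.
Hypothesis S_dense : densely_defined S.
Hypothesis S_adjoint : is_adjoint S Sstar.
Hypothesis K_dom : forall xi, dom K xi <-> exists x, dom S x /\ xi = A x.
Hypothesis K_app : forall x, dom S x -> app K (A x) = A (app S x).

Lemma conjugated_adjoint_inner eta zeta xi :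
  dom Sstar (A eta) -> A zeta = app Sstar (A eta) -> dom K xi ->
  inner (app K xi) eta = inner xi zeta.
Proof.
  intros Deta Ezeta Dxi; apply K_dom in Dxi as [x [Dx ->]].
  rewrite K_app, A_sym, (proj2 S_adjoint), <- Ezeta, <- A_sym by assumption.
  reflexivity.
Qed.

Lemma conjugated_adjoint_domain eta zeta :
  (forall xi, dom K xi -> inner (app K xi) eta = inner xi zeta) ->
  dom Sstar (A eta) /\ A zeta = app Sstar (A eta).
Proof.
  intro Hzeta.
  assert (S_inner : forall x, dom S x -> inner (app S x) (A eta) = inner x (A zeta)).
  { intros x Dx.
    rewrite <- A_sym, <- K_app, Hzeta, A_sym by (auto || (apply K_dom; eauto)).
    reflexivity. }
  assert (Deta : dom Sstar (A eta)) by (apply (proj1 S_adjoint); eauto).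
  split; [exact Deta |].
  apply vsub_eq0, (orthogonal_dense_eq0 (dom S)); [exact S_dense |].
  intros x Dx.
  rewrite inner_subr, <- (proj2 S_adjoint), S_inner by assumption.
  unfold Cadd, Cmul, rc, C0; simpl; f_equal; ring.
Qed.

End ConjugatedAdjoint.

Lemma metric_sqrt_injective {H : Type} {HS : HilbertSpace H} (G Ghalf : H -> H) :
  bounded_metric_operator G -> positive_sqrt Ghalf G ->
  forall x, Ghalf x = vzero -> x = vzero.
Proof.
  intros [_ G_pos] [[[_ [Ghalf_scal _]] _] [_ Ghalf_sq]] x Hx.
  apply NNPP; intro Hnz; destruct (G_pos x Hnz) as [_ Pos].
  rewrite <- Ghalf_sq, Hx, (linear_vzero Ghalf Ghalf_scal), inner_0l in Pos.
  simpl in Pos; lra.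
Qed.

Lemma bounded_op_pos_bound {H : Type} {HS : HilbertSpace H} (A : H -> H) :
  bounded_op A -> exists M, 0 < M /\ forall x, norm (A x) <= M * norm x.
Proof.
  intros [_ [_ [M HM]]]; exists (Rabs M + 1); split; [pose proof (Rabs_pos M); lra |].
  intro x; eapply Rle_trans; [apply HM |].
  apply Rmult_le_compat_r; [apply norm_ge0 | pose proof (Rle_abs M); lra].
Qed.

Theorem lemma5p5 (H : Type) (HS : HilbertSpace H)
  (G Ghalf : H -> H) (S Sstar K Kstar_rhs : Op H) :
  bounded_metric_operator G ->
  positive_sqrt Ghalf G ->
  linear_op S -> closed_op S -> densely_defined S ->
  is_adjoint S Sstar ->
  (forall xi, dom K xi <-> exists x, dom S x /\ xi = Ghalf x) ->
  (forall x, dom S x -> app K (Ghalf x) = Ghalf (app S x)) ->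
  (forall eta, dom Kstar_rhs eta <->
     dom Sstar (Ghalf eta) /\ exists zeta, Ghalf zeta = app Sstar (Ghalf eta)) ->
  (forall eta, dom Kstar_rhs eta -> Ghalf (app Kstar_rhs eta) = app Sstar (Ghalf eta)) ->
  densely_defined K /\ is_adjoint K Kstar_rhs.
Proof.
  intros HG Hsq _ _ S_dense S_adj K_dom K_app Ks_dom Ks_app.
  pose proof Hsq as [[Ghalf_bounded Ghalf_sym] _].
  pose proof Ghalf_bounded as [Ghalf_add [Ghalf_scal _]].
  destruct (bounded_op_pos_bound Ghalf Ghalf_bounded) as [M [M_pos Ghalf_bound]].
  pose proof (selfadjoint_injective_dense_range Ghalf Ghalf_add Ghalf_scal Ghalf_sym
                M M_pos Ghalf_bound (metric_sqrt_injective G Ghalf HG Hsq)) as range_dense.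
  split; [| split].
  - intros x e He.
    destruct (dense_linear_image Ghalf Ghalf_add Ghalf_scal M M_pos Ghalf_bound (dom S)
                range_dense S_dense x e He) as [xi [Dxi Hxi]].
    exists xi; split; [apply K_dom |]; assumption.
  - intro eta; rewrite Ks_dom; split.
    + intros [Deta [zeta Hzeta]]; exists zeta; intros xi Dxi.
      exact (conjugated_adjoint_inner Ghalf Ghalf_sym S Sstar K S_adj K_dom K_app
               eta zeta xi Deta Hzeta Dxi).
    + intros [zeta Hzeta].
      destruct (conjugated_adjoint_domain Ghalf Ghalf_sym S Sstar K S_dense S_adj K_dom K_app
                  eta zeta Hzeta) as [Deta Ezeta].
      split; [| exists zeta]; assumption.
  - intros eta xi Deta Dxi.
    apply (conjugated_adjoint_inner Ghalf Ghalf_sym S Sstar K S_adj K_dom K_app);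
      [apply Ks_dom | apply Ks_app |]; assumption.
Qed.
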